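(* Let $\Gamma=(V,E,\varphi)$ be an oriented hypergraph with adjacency matrix $A\neq \mathbf 0$, strong coloring number $\chi(\Gamma)$, and smallest and largest normalized Laplacian eigenvalues $\lambda_1$ and $\lambda_N$. Then $\lambda_1<1<\lambda_N$ and \[ \chi(\Gamma)\;\geq\;\frac{\lambda_N-\lambda_1}{\min\{\lambda_N-1,\;1-\lambda_1\}} . \] (If instead $A=\mathbf 0$, then $\lambda_1=\lambda_N=1$, the right-hand side is interpreted as $1$ by convention, and the inequality is trivial.)
   Context: An oriented hypergraph $\Gamma=(V,E,\varphi)$ consists of a finite vertex set $V$ with $|V|=N$, an edge set $E\subseteq\mathcal P(V)$, and a function $\varphi\colon V\times E\to\{-1,0,1\}$ with $\varphi(v,e)\neq 0$ iff $v\in e$. Two vertices $v,w\in e$ are co-oriented in $e$ if $\varphi(v,e)=\varphi(w,e)$ and anti-oriented in $e$ if $\varphi(v,e)=-\varphi(w,e)$. The degree is $\deg v=|\{e\in E: v\in e\}|$; we assume every vertex has degree at least $1$, and $D=\mathrm{diag}(\deg v)_{v\in V}$. The adjacency matrix $A$ is the $N\times N$ matrix with $A_{v,v}=0$ and, for $v\neq w$, $A_{v,w}=(\#\text{edges in which } v,w \text{ are anti-oriented})-(\#\text{edges in which } v,w \text{ are co-oriented})$. The normalized Laplacian is $L=\mathrm{Id}-D^{-1}A$ (equivalently $D^{-1}\mathcal I\mathcal I^\top$ with incidence matrix $\mathcal I_{v,e}=\varphi(v,e)$); it is self-adjoint for $\langle f,g\rangle=\sum_{v}\deg v\, f(v)g(v)$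 on functions $V\to\mathbb R$, and its (real) eigenvalues are $\lambda_1\le\dots\le\lambda_N$. A proper strong $k$-coloring is a map $V\to\{1,\dots,k\}$ such that any two distinct vertices lying in a common edge receive different colors; $\chi(\Gamma)$ is the least $k$ for which one exists. *)

From HB Require Import structures.
From mathcomp Require Import all_boot all_order all_algebra.
Set Implicit Arguments. Unset Strict Implicit. Unset Printing Implicit Defensive.
Import Order.TTheory GRing.Theory Num.Theory.
Local Open Scope ring_scope.

Definition is_oriented_hypergraph (V : finType) (E : {set {set V}})
  (phi : V -> {set V} -> int) : Prop :=
  forall v e, e \in E -> (phi v e \in [:: -1; 0; 1]) && ((phi v e != 0) == (v \in e)).

Definition hdeg (V : finType) (E : {set {set V}}) (v : V) : nat :=
  #|[set e in E | v \in e]|.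

Definition n_anti (V : finType) (E : {set {set V}}) (phi : V -> {set V} -> int) (v w : V) : nat :=
  #|[set e in E | [&& v \in e, w \in e & phi v e == - phi w e]]|.
Definition n_co (V : finType) (E : {set {set V}}) (phi : V -> {set V} -> int) (v w : V) : nat :=
  #|[set e in E | [&& v \in e, w \in e & phi v e == phi w e]]|.

Definition adjM (R : numFieldType) (V : finType) (E : {set {set V}})
  (phi : V -> {set V} -> int) : 'M[R]_#|V| :=
  \matrix_(i, j) (if i == j then 0
                  else (n_anti E phi (enum_val i) (enum_val j))%:R
                       - (n_co E phi (enum_val i) (enum_val j))%:R).

Definition degM (R : numFieldType) (V : finType) (E : {set {set V}}) : 'M[R]_#|V| :=
  diag_mx (\row_i (hdeg E (enum_val i))%:R).

Definition nlap (R : numFieldType) (V : finType) (E : {set {set V}})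
  (phi : V -> {set V} -> int) : 'M[R]_#|V| :=
  1%:M - invmx (degM R E) *m adjM R E phi.

Definition strong_colorable (V : finType) (E : {set {set V}}) (k : nat) : bool :=
  [exists c : {ffun V -> 'I_k},
     [forall e in E, forall v in e, forall w in e, (v != w) ==> (c v != c w)]].

Lemma strong_colorable_card (V : finType) (E : {set {set V}}) :
  exists k, strong_colorable E k.
Proof.
exists #|V|; apply/existsP; exists [ffun v => enum_rank v].
apply/forallP => e; apply/implyP => _; apply/forallP => v; apply/implyP => _.
apply/forallP => w; apply/implyP => _; apply/implyP => hvw.
by rewrite !ffunE; apply: contra hvw => /eqP/enum_rank_inj ->.
Qed.

Definition chi (V : finType) (E : {set {set V}}) : nat :=
  ex_minn (strong_colorable_card E).

From HB Require Import structures.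
From mathcomp Require Import all_boot all_order all_algebra.
From mathcomp Require Import complex ring lra.
Set Implicit Arguments. Unset Strict Implicit. Unset Printing Implicit Defensive.
Import Order.TTheory GRing.Theory Num.Theory.
Local Open Scope ring_scope.

(** With D the degree matrix, L = D^-1 (D - A) is similar to the symmetric
    matrix D^-1/2 (D - A) D^-1/2, so the Rayleigh principle gives
    l1 <y D y> <= <y (D - A) y> <= lN <y D y> for every y.  As A has zero
    diagonal but A <> 0, the test vectors e_i +- A_ij e_j make <y A y> of both
    signs, whence l1 < 1 < lN.  A proper strong k-colouring makes A vanish on
    each colour class; splitting an eigenvector w of L into its k colour parts
    and using that A - (1 - lN) D and (l1 - 1) D - A are positive semidefinite
    yields Hoffman's bounds lN - l1 <= k (lN - 1) and lN - l1 <= k (1 - l1). *)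

Section BilinearForm.
Variables (R : comPzRingType) (n : nat).
Implicit Types (M : 'M[R]_n) (y z : 'rV[R]_n).

Definition bform M y z := (y *m M *m z^T) 0 0.

Lemma bformE M y z : bform M y z = \sum_b \sum_a y 0 a * M a b * z 0 b.
Proof. by rewrite /bform mxE; apply: eq_bigr => b _; rewrite !mxE big_distrl. Qed.

Lemma bform0l M z : bform M 0 z = 0.
Proof. by rewrite /bform !mul0mx mxE. Qed.

Lemma bformDl M y1 y2 z : bform M (y1 + y2) z = bform M y1 z + bform M y2 z.
Proof. by rewrite /bform !mulmxDl mxE. Qed.

Lemma bformDr M y z1 z2 : bform M y (z1 + z2) = bform M y z1 + bform M y z2.
Proof. by rewrite /bform linearD /= mulmxDr mxE. Qed.

Lemma bformBl M y1 y2 z : bform M (y1 - y2) z = bform M y1 z - bform M y2 z.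
Proof. by rewrite /bform !mulmxBl mxE [X in _ + X]mxE. Qed.

Lemma bformBr M y z1 z2 : bform M y (z1 - z2) = bform M y z1 - bform M y z2.
Proof. by rewrite /bform linearB /= mulmxBr mxE [X in _ + X]mxE. Qed.

Lemma bformZl M a y z : bform M (a *: y) z = a * bform M y z.
Proof. by rewrite /bform -!scalemxAl mxE. Qed.

Lemma bformZr M a y z : bform M y (a *: z) = a * bform M y z.
Proof. by rewrite /bform linearZ /= -scalemxAr mxE. Qed.

Lemma bformBM M1 M2 y z : bform (M1 - M2) y z = bform M1 y z - bform M2 y z.
Proof. by rewrite /bform mulmxBr mulmxBl mxE [X in _ + X]mxE. Qed.

Lemma bformZM a M y z : bform (a *: M) y z = a * bform M y z.
Proof. by rewrite /bform -scalemxAr -scalemxAl mxE. Qed.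

Lemma bformNM M y z : bform (- M) y z = - bform M y z.
Proof. by rewrite /bform mulmxN mulNmx mxE. Qed.

Lemma bform_suml k M (a : 'I_k -> 'rV[R]_n) z :
  bform M (\sum_i a i) z = \sum_i bform M (a i) z.
Proof. by rewrite /bform !mulmx_suml summxE. Qed.

Lemma bform_sumr k M (a : 'I_k -> 'rV[R]_n) y :
  bform M y (\sum_i a i) = \sum_i bform M y (a i).
Proof. by rewrite /bform raddf_sum /= mulmx_sumr summxE. Qed.

Lemma bform_sym M y z : M^T = M -> bform M y z = bform M z y.
Proof.
move=> M_sym; have -> : bform M y z = (y *m M *m z^T)^T 0 0 by rewrite mxE.
by rewrite /bform !trmx_mul trmxK M_sym mulmxA.
Qed.

Lemma bform_mulmx M (P : 'M[R]_n) y z :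
  bform M (y *m P) (z *m P) = bform (P *m M *m P^T) y z.
Proof. by rewrite /bform trmx_mul !mulmxA. Qed.

Lemma bform_delta M i j : bform M (delta_mx 0 i) (delta_mx 0 j) = M i j.
Proof. by rewrite /bform trmx_delta -rowE -colE !mxE. Qed.

Lemma bform_diag (d : 'I_n -> R) y :
  bform (diag_mx (\row_i d i)) y y = \sum_i d i * y 0 i ^+ 2.
Proof.
rewrite bformE; apply: eq_bigr => b _; rewrite (bigD1 b) //= big1 ?addr0.
  by rewrite !mxE eqxx mulr1n expr2 mulrCA mulrA.
by move=> c cb; rewrite !mxE (negbTE cb) mulr0n mulr0 mul0r.
Qed.

Lemma bform_two_deltas M i j s : M^T = M ->
  bform M (delta_mx 0 i + s *: delta_mx 0 j) (delta_mx 0 i + s *: delta_mx 0 j) =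
  M i i + 2%:R * s * M i j + s ^+ 2 * M j j.
Proof.
move=> M_sym; rewrite !bformDl !bformDr !bformZl !bformZr !bform_delta.
have -> : M j i = M i j by rewrite -[in LHS]M_sym mxE.
rewrite expr2; ring.
Qed.
End BilinearForm.

Section SpectralBounds.
Local Open Scope sesquilinear_scope.

Lemma normalmx_spectral_diag_eigenvalue (C : numClosedFieldType) n (A : 'M[C]_n) i :
  A \is normalmx -> eigenvalue A (spectral_diag A 0 i).
Proof.
move=> /orthomx_spectralP A_spec; set P := spectralmx A in A_spec.
have P_unit : P \in unitmx by apply: spectral_unit.
apply/eigenvalueP; exists (row i P).
  rewrite [in LHS]A_spec rowE !mulmxA mulmxK // scalemxAl; congr (_ *m P).
  apply/rowP => j; rewrite mul_mx_diag !mxE.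
  by case: (j =P i) => [->|]; rewrite ?mulr1 ?mulr0 ?mul0r ?mul1r.
apply/eqP => /(congr1 (mulmx^~ (invmx P))).
rewrite rowE mulmxK // mul0mx => /rowP/(_ i).
by rewrite !mxE !eqxx => /eqP; rewrite oner_eq0.
Qed.

Lemma normalmx_form_spectral (C : numClosedFieldType) n (A : 'M[C]_n) (z : 'rV[C]_n) :
  A \is normalmx -> let u := z *m (spectralmx A)^t* in
  (z *m A *m z^t*) 0 0 = \sum_j spectral_diag A 0 j * `|u 0 j| ^+ 2 /\
  (z *m z^t*) 0 0 = \sum_j `|u 0 j| ^+ 2.
Proof.
move=> /orthomx_spectralP; set P := spectralmx A => A_spec u.
have P_unitary : P \is unitarymx by apply: spectral_unitarymx.
have Pz : P *m z^t* = u^t* by rewrite /u trmx_mul map_mxM trmxCK.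
have -> : (z *m z^t*) 0 0 = (u *m u^t*) 0 0.
  by rewrite -Pz /u mulmxA -(mulmxA z) -invmx_unitary // mulVmx ?mulmx1 // unitarymx_unit.
split; last by rewrite mxE; apply: eq_bigr => j _; rewrite !mxE normCK.
rewrite [in LHS]A_spec invmx_unitary // !mulmxA -(mulmxA _ P) Pz mxE.
by apply: eq_bigr => j _; rewrite mul_mx_diag !mxE normCK mulrCA mulrA.
Qed.

Lemma normalmx_form_bounds (C : numClosedFieldType) n (A : 'M[C]_n) (a b : C) :
  A \is normalmx -> (forall i, a <= spectral_diag A 0 i <= b) ->
  forall z : 'rV[C]_n,
  a * (z *m z^t*) 0 0 <= (z *m A *m z^t*) 0 0 <= b * (z *m z^t*) 0 0.
Proof.
move=> A_normal A_spec z; have [-> ->] := normalmx_form_spectral z A_normal.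
rewrite !mulr_sumr; apply/andP; split; apply: ler_sum => j _;
  by rewrite ler_wpM2r ?exprn_ge0 //; case/andP: (A_spec j).
Qed.

Lemma symmetric_bform_bounds (R : rcfType) n (S : 'M[R]_n) (a b : R) :
  S^T = S -> (forall l, eigenvalue S l -> a <= l <= b) ->
  forall z, a * bform 1%:M z z <= bform S z z <= b * bform 1%:M z z.
Proof.
move=> S_sym S_spec z.
(* Pass to [R[i]], where the spectral theorem for hermitian matrices applies. *)
pose f := real_complex R.
have conj_real m p (M : 'M[R]_(m, p)) : (map_mx f M)^t* = (map_mx f M)^T.
  apply/matrixP => i j; rewrite !mxE conj_Creal //.
  by apply/complex_realP; exists (M j i).
pose Sc := map_mx f S.
have Sc_herm : Sc \is hermsymmx.
  by apply/is_hermitianmxP; rewrite expr0 scale1r conj_real map_trmx S_sym.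
have Sc_normal := hermitian_normalmx Sc_herm.
have Sc_spec i : f a <= spectral_diag Sc 0 i <= f b.
  have /mxOverP/(_ 0 i)/RRe_real Xi := hermitian_spectral_diag_real Sc_herm.
  rewrite -Xi !lecR; apply: S_spec.
  by have := normalmx_spectral_diag_eigenvalue i Sc_normal; rewrite -Xi /Sc eigenvalue_map.
have cbform M : f (bform M z z) = (map_mx f z *m map_mx f M *m (map_mx f z)^t*) 0 0.
  by rewrite conj_real map_trmx -!map_mxM mxE.
have cbform1 : f (bform 1%:M z z) = (map_mx f z *m (map_mx f z)^t*) 0 0.
  by rewrite cbform map_mx1 mulmx1.
have := normalmx_form_bounds Sc_normal Sc_spec (map_mx f z).
by rewrite -[Sc]/(map_mx f S) -cbform -cbform1 -!rmorphM !lecR.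
Qed.
End SpectralBounds.

Section ColourParts.
Variables (R : comPzRingType) (n k : nat) (col : 'I_n -> 'I_k).

Definition colour_part (w : 'rV[R]_n) (j : 'I_k) : 'rV[R]_n :=
  \row_u (if col u == j then w 0 u else 0).

Lemma sum_colour_parts w : \sum_j colour_part w j = w.
Proof.
apply/rowP => u; rewrite summxE (bigD1 (col u)) //= big1 ?addr0 => [|j].
  by rewrite mxE eqxx.
by rewrite mxE eq_sym => /negbTE ->.
Qed.

Lemma bform_colour_part (A : 'M[R]_n) w j :
  (forall u v, col u = col v -> A u v = 0) ->
  bform A (colour_part w j) (colour_part w j) = 0.
Proof.
move=> A_col; rewrite bformE big1 // => v _; rewrite big1 // => u _; rewrite !mxE.
case: eqP => [uj|]; case: eqP => [vj|]; rewrite ?mul0r ?mulr0 //.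
by rewrite A_col ?mulr0 ?mul0r // uj vj.
Qed.

Lemma sum_diag_bform_colour_parts (d : 'I_n -> R) w :
  \sum_j bform (diag_mx (\row_i d i)) (colour_part w j) (colour_part w j) =
  bform (diag_mx (\row_i d i)) w w.
Proof.
under eq_bigr do rewrite bform_diag; rewrite bform_diag exchange_big /=.
apply: eq_bigr => u _; rewrite -mulr_sumr; congr (_ * _).
rewrite (bigD1 (col u)) //= big1 ?addr0 => [|j]; rewrite !mxE ?eqxx //.
by rewrite eq_sym => /negbTE ->; rewrite expr0n.
Qed.
End ColourParts.

Section PositiveForms.
Variables (R : realFieldType) (n : nat).
Implicit Types (M : 'M[R]_n) (y w : 'rV[R]_n) (d : 'I_n -> R).

Lemma diag_bform_gt0 d y : (forall i, 0 < d i) -> y != 0 ->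
  0 < bform (diag_mx (\row_i d i)) y y.
Proof.
move=> d_gt0 y_neq0; rewrite bform_diag.
have [u yu_neq0] : exists u, y 0 u != 0.
  apply/existsP; apply: contraNT y_neq0 => /existsPn y0.
  by apply/eqP/rowP => u; rewrite mxE; apply/eqP/negPn/y0.
rewrite (bigD1 u) //= ltr_wpDr ?sumr_ge0 // => [i _|].
  by rewrite mulr_ge0 ?sqr_ge0 ?ltW.
by rewrite mulr_gt0 // lt0r sqr_ge0 sqrf_eq0 yu_neq0.
Qed.

Lemma zero_diag_bform_pos M : M^T = M -> (forall i, M i i = 0) -> M != 0 ->
  exists y, 0 < bform M y y.
Proof.
move=> M_sym M_diag M_neq0.
have [[i j] /= Mij_neq0] : exists p : 'I_n * 'I_n, M p.1 p.2 != 0.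
  apply/existsP; apply: contraNT M_neq0 => /existsPn M0.
  by apply/eqP/matrixP => i j; rewrite mxE; apply/eqP/negPn/(M0 (i, j)).
exists (delta_mx 0 i + M i j *: delta_mx 0 j).
rewrite bform_two_deltas // !M_diag mulr0 addr0 add0r -mulrA mulr_gt0 ?ltr0n //.
by rewrite lt0r sqr_ge0 sqrf_eq0 Mij_neq0.
Qed.

(* Expand [0 <= \sum_(i, j) bform M (a i - a j) (a i - a j)]. *)
Lemma psd_bform_sum_le k M (a : 'I_k -> 'rV[R]_n) :
  M^T = M -> (forall y, 0 <= bform M y y) ->
  bform M (\sum_i a i) (\sum_i a i) <= k%:R * \sum_i bform M (a i) (a i).
Proof.
move=> M_sym M_psd.
have diff_ge0 : 0 <= \sum_i \sum_j bform M (a i - a j) (a i - a j).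
  by apply: sumr_ge0 => i _; apply: sumr_ge0 => j _.
have diff_expand i j : bform M (a i - a j) (a i - a j) =
    bform M (a i) (a i) + bform M (a j) (a j) - 2%:R * bform M (a i) (a j).
  by rewrite !bformBl !bformBr (bform_sym (a j) (a i) M_sym); ring.
have sum_const (x : R) : \sum_(j < k) x = k%:R * x by rewrite sumr_const card_ord mulr_natl.
have cross : \sum_i \sum_j 2%:R * bform M (a i) (a j) =
    2%:R * bform M (\sum_i a i) (\sum_i a i).
  rewrite bform_suml mulr_sumr; apply: eq_bigr => i _.
  by rewrite bform_sumr mulr_sumr.
move: diff_ge0; under eq_bigr do under eq_bigr do rewrite diff_expand.
under eq_bigr do rewrite sumrB big_split /= sum_const.
rewrite sumrB big_split /= cross sum_const -mulr_sumr => ?; lra.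
Qed.

Lemma diag_pos_unitmx d : (forall i, 0 < d i) -> diag_mx (\row_i d i) \in unitmx.
Proof.
move=> d_gt0; rewrite unitmxE det_diag unitfE prodf_seq_neq0.
by apply/allP => i _; rewrite mxE gt_eqF.
Qed.

(* [P := M - m D] is positive semidefinite and vanishes on each colour part of
   [w], while [bform P w w = (mu - m) bform D w w]. *)
Lemma hoffman_bound k (col : 'I_n -> 'I_k) M d (mu m : R) w :
  M^T = M -> (forall u v, col u = col v -> M u v = 0) -> (forall i, 0 < d i) ->
  (forall y, m * bform (diag_mx (\row_i d i)) y y <= bform M y y) ->
  w *m M = mu *: (w *m diag_mx (\row_i d i)) -> w != 0 ->
  mu - m <= k%:R * - m.
Proof.
move=> M_sym M_col d_gt0 m_low w_eigen w_neq0.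
set D := diag_mx _ in m_low w_eigen *.
pose P := M - m *: D.
have P_sym : P^T = P by rewrite /P linearB linearZ /= M_sym tr_diag_mx.
have P_psd y : 0 <= bform P y y by rewrite bformBM bformZM subr_ge0.
have P_w : bform P w w = (mu - m) * bform D w w.
  by rewrite bformBM bformZM {1}/bform w_eigen -scalemxAl mxE mulrBl.
have P_parts : \sum_j bform P (colour_part col w j) (colour_part col w j) =
    - m * bform D w w.
  rewrite -(sum_diag_bform_colour_parts col) mulr_sumr; apply: eq_bigr => j _.
  by rewrite bformBM bformZM bform_colour_part // mulNr sub0r.
have := psd_bform_sum_le (colour_part col w) P_sym P_psd.
by rewrite sum_colour_parts P_w P_parts mulrA ler_pM2r // diag_bform_gt0.
Qed.
End PositiveForms.

Section NormalizedLaplacian.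
Variables (R : rcfType) (n : nat) (d : 'I_n -> R) (A : 'M[R]_n).
Hypotheses (d_gt0 : forall i, 0 < d i) (A_sym : A^T = A).
Let D := diag_mx (\row_i d i).
Let L := 1%:M - invmx D *m A.

Lemma laplacian_eigenvector l : eigenvalue L l ->
  exists2 w : 'rV_n, w *m A = (1 - l) *: (w *m D) & w != 0.
Proof.
have D_unit : D \in unitmx by exact: diag_pos_unitmx.
move=> /eigenvalueP [v vL v_neq0]; exists (v *m invmx D).
  rewrite mulmxKV // scalerBl scale1r -vL mulmxBr mulmx1 mulmxA.
  by rewrite opprB addrC subrK.
by apply: contraNneq v_neq0 => vD0; rewrite -(mulmxKV D_unit v) vD0 mul0mx.
Qed.

Let Dh := diag_mx (\row_i Num.sqrt (d i)).

Let Dh_unit : Dh \in unitmx.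
Proof. by apply: diag_pos_unitmx => i; rewrite sqrtr_gt0. Qed.

Let Dh_sym : Dh^T = Dh.
Proof. exact: tr_diag_mx. Qed.

Let DhDh : Dh *m Dh = D.
Proof.
rewrite mulmx_diag; congr diag_mx; apply/rowP => i.
by rewrite !mxE -expr2 sqr_sqrtr ?ltW.
Qed.

Let S := invmx Dh *m (D - A) *m invmx Dh.

Let S_sym : S^T = S.
Proof. by rewrite !trmx_mul trmx_inv Dh_sym linearB /= tr_diag_mx A_sym mulmxA. Qed.

Let L_similar : L = invmx Dh *m S *m Dh.
Proof.
have D_unit : D \in unitmx by rewrite -DhDh unitmx_mul Dh_unit.
have invD : invmx D = invmx Dh *m invmx Dh.
  have DX : D *m (invmx Dh *m invmx Dh) = 1%:M.
    by rewrite -DhDh !mulmxA mulmxK // mulmxV.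
  by rewrite -[LHS]mulmx1 -DX mulmxA mulVmx // mul1mx.
by rewrite /S -!mulmxA mulVmx // mulmx1 mulmxA -invD mulmxBr mulVmx.
Qed.

Lemma laplacian_rayleigh a b : (forall l, eigenvalue L l -> a <= l <= b) ->
  forall y, a * bform D y y <= bform (D - A) y y <= b * bform D y y.
Proof.
move=> L_spec y.
have S_spec l : eigenvalue S l -> a <= l <= b.
  move=> /eigenvalueP [v vS v_neq0]; apply: L_spec; apply/eigenvalueP.
  exists (v *m Dh).
    by rewrite L_similar mulmxA (mulmxA (v *m Dh)) mulmxK // vS scalemxAl.
  by apply: contraNneq v_neq0 => vDh0; rewrite -(mulmxK Dh_unit v) vDh0 mul0mx.
have := symmetric_bform_bounds S_sym S_spec (y *m Dh).
by rewrite !bform_mulmx Dh_sym mulmx1 DhDh /S !mulmxA mulmxV // mul1mx mulmxKV.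
Qed.

Lemma laplacian_spectrum_around_one a b :
  (forall l, eigenvalue L l -> a <= l <= b) ->
  (forall i, A i i = 0) -> A != 0 -> a < 1 < b.
Proof.
move=> L_spec A_diag A_neq0.
have D_pos M y : 0 < bform M y y -> 0 < bform D y y.
  move=> My; apply: diag_bform_gt0 => //; apply: contraTneq My => ->.
  by rewrite bform0l ltxx.
have [y Ay] := zero_diag_bform_pos A_sym A_diag A_neq0.
have [z Az] : exists z, 0 < bform (- A) z z.
  apply: zero_diag_bform_pos; first by rewrite linearN /= A_sym.
    by move=> i; rewrite mxE A_diag oppr0.
  by rewrite oppr_eq0.
have /andP[ray_y _] := laplacian_rayleigh L_spec y.
have /andP[_ ray_z] := laplacian_rayleigh L_spec z.
have Dy := D_pos _ _ Ay; have Dz := D_pos _ _ Az.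
rewrite bformBM in ray_y; rewrite bformBM in ray_z; rewrite bformNM in Az.
by apply/andP; split; nra.
Qed.

Lemma laplacian_hoffman_bound k (col : 'I_n -> 'I_k) a b :
  (forall u v, col u = col v -> A u v = 0) ->
  eigenvalue L a -> eigenvalue L b -> (forall l, eigenvalue L l -> a <= l <= b) ->
  b - a <= k%:R * (b - 1) /\ b - a <= k%:R * (1 - a).
Proof.
move=> A_col La Lb L_spec; have ray := laplacian_rayleigh L_spec.
have [wa wa_eigen wa_neq0] := laplacian_eigenvector La.
have [wb wb_eigen wb_neq0] := laplacian_eigenvector Lb.
split.
  have A_low y : (1 - b) * bform D y y <= bform A y y.
    by have /andP[_] := ray y; rewrite bformBM; lra.
  by have := hoffman_bound A_sym A_col d_gt0 A_low wa_eigen wa_neq0; rewrite opprB; lra.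
have NA_sym : (- A)^T = - A by rewrite linearN /= A_sym.
have NA_col u v : col u = col v -> (- A) u v = 0.
  by move=> uv; rewrite mxE A_col ?oppr0.
have NA_low y : (a - 1) * bform D y y <= bform (- A) y y.
  by have /andP[+ _] := ray y; rewrite bformBM bformNM; lra.
have wb_eigenN : wb *m - A = (b - 1) *: (wb *m D).
  by rewrite mulmxN wb_eigen -scaleNr opprB.
by have := hoffman_bound NA_sym NA_col d_gt0 NA_low wb_eigenN wb_neq0; rewrite opprB; lra.
Qed.
End NormalizedLaplacian.

Section AdjacencyMatrix.
Variables (R : numFieldType) (V : finType) (E : {set {set V}}) (phi : V -> {set V} -> int).
Local Notation A := (adjM R E phi).

Lemma adjM_sym : A^T = A.
Proof.
apply/matrixP => i j; rewrite !mxE eq_sym; case: eqP => // _.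
congr (_%:R - _%:R); apply: eq_card => e; rewrite !inE; case: (e \in E) => //=.
  rewrite andbA [X in X && _]andbC -andbA; congr (_ && (_ && _)).
  by rewrite -eqr_oppLR eq_sym.
by rewrite andbA [X in X && _]andbC -andbA eq_sym.
Qed.

Lemma adjM_diag i : A i i = 0.
Proof. by rewrite mxE eqxx. Qed.

Lemma adjM_colour_classes k : strong_colorable E k ->
  exists col : 'I_#|V| -> 'I_k, forall i j, col i = col j -> A i j = 0.
Proof.
case/existsP => c /forallP c_proper; exists (fun i => c (enum_val i)) => i j cij.
rewrite mxE; case: eqP => // /eqP i_neq_j.
have no_edge e : e \in E -> enum_val i \in e -> enum_val j \in e -> False.
  move=> eE ie je; move: (c_proper e); rewrite eE => /forallP/(_ (enum_val i)).
  rewrite ie => /forallP/(_ (enum_val j)); rewrite je cij eqxx implybF.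
  by rewrite (inj_eq enum_val_inj) i_neq_j.
have [-> ->] : n_anti E phi (enum_val i) (enum_val j) = 0%N /\
               n_co E phi (enum_val i) (enum_val j) = 0%N.
  by split; apply: eq_card0 => e; rewrite !inE;
    apply/negP => /and4P[eE ie je _]; apply: no_edge eE ie je.
by rewrite subrr.
Qed.

Lemma strong_colorable_chi : strong_colorable E (chi E).
Proof. by rewrite /chi; case: ex_minnP. Qed.
End AdjacencyMatrix.

Theorem mainTheorem1 (R : rcfType) (V : finType) (E : {set {set V}})
  (phi : V -> {set V} -> int)
  (Hphi : is_oriented_hypergraph E phi)
  (Hdeg : forall v : V, (0 < hdeg E v)%N)
  (HA : adjM R E phi != 0)
  (l1 lN : R)
  (Hl1 : eigenvalue (nlap R E phi) l1)
  (Hl1min : forall l, eigenvalue (nlap R E phi) l -> l1 <= l)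
  (HlN : eigenvalue (nlap R E phi) lN)
  (HlNmax : forall l, eigenvalue (nlap R E phi) l -> l <= lN) :
  l1 < 1 < lN /\
  (lN - l1) / Num.min (lN - 1) (1 - l1) <= (chi E)%:R.
Proof.
pose d (i : 'I_#|V|) : R := (hdeg E (enum_val i))%:R.
have d_gt0 i : 0 < d i by rewrite ltr0n.
have L_spec l : eigenvalue (nlap R E phi) l -> l1 <= l <= lN.
  by move=> Ll; rewrite Hl1min ?HlNmax.
have A_sym := adjM_sym R E phi.
have [col A_col] := adjM_colour_classes R phi (strong_colorable_chi E).
have [l1_lt1 lN_gt1] : l1 < 1 /\ 1 < lN.
  exact/andP/(laplacian_spectrum_around_one d_gt0 A_sym L_spec (adjM_diag R E phi) HA).
have [bound_N bound_1] := laplacian_hoffman_bound d_gt0 A_sym A_col Hl1 HlN L_spec.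
split; first by rewrite l1_lt1 lN_gt1.
have min_gt0 : 0 < Num.min (lN - 1) (1 - l1) by rewrite lt_min !subr_gt0 lN_gt1 l1_lt1.
by rewrite ler_pdivrMr // minEle; case: (leP (lN - 1) (1 - l1)).
Qed.
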